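(* Let $X\in\mathbb{R}^{n\times r}$ have linearly independent columns and let $A\in\mathbb{R}^{r\times r}$ be skewsymmetric. Let $Y$ be the random subset of $\{1,\dots,n\}$ with law $$\mathbb{P}(Y=\mathtt{C})=\frac{1}{\det(A+X^\top X)}\det\begin{bmatrix}0_{|\mathtt{C}|}&X_{\mathtt{C}:}\\-(X_{\mathtt{C}:})^\top&A\end{bmatrix}.$$ Then for every $T\subseteq\{1,\dots,n\}$, $$\mathbb{P}(T\subseteq Y)=\det\big(K_{TT}\big),\qquad K=X(A+X^\top X)^{-1}X^\top,$$ where $K_{TT}$ is the principal submatrix of $K$ indexed by $T$.
   Context: $X_{\mathtt{C}:}$ is the submatrix of $X$ with rows indexed by $\mathtt{C}$ in increasing order. $0_m$ is the $m\times m$ zero matrix. For $\mathtt{C}=\emptyset$ the block matrix is $A$. The determinant of the empty matrix is $1$. *)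

From mathcomp Require Import all_boot all_order all_algebra.
Set Implicit Arguments. Unset Strict Implicit. Unset Printing Implicit Defensive.
Import Order.TTheory GRing.Theory Num.Theory.
Local Open Scope ring_scope.

(* rowsubC X C = X_{C:}: rows of X indexed by C in increasing order
   (enum C lists the elements of C : {set 'I_n} in increasing order). *)
Definition rowsubC (R : Type) (n r : nat) (X : 'M[R]_(n, r)) (C : {set 'I_n})
  : 'M[R]_(#|C|, r) := \matrix_(i < #|C|, j < r) X (enum_val i) j.

Definition psubmx (R : Type) (n : nat) (K : 'M[R]_n) (T : {set 'I_n})
  : 'M[R]_#|T| := \matrix_(i < #|T|, j < #|T|) K (enum_val i) (enum_val j).

Definition blockC (R : pzRingType) (n r : nat) (X : 'M[R]_(n, r)) (A : 'M[R]_r)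
  (C : {set 'I_n}) : 'M[R]_(#|C| + r) :=
  block_mx (0 : 'M[R]_#|C|) (rowsubC X C) (- (rowsubC X C)^T) A.

Definition probY (R : fieldType) (n r : nat) (X : 'M[R]_(n, r)) (A : 'M[R]_r)
  (C : {set 'I_n}) : R :=
  \det (blockC X A C) / \det (A + X^T *m X).

(* Let D be the diagonal 0/1 matrix with D_ii = 1 exactly when i is not in T,
   and B = A + X^T X.  Expanding det [D, X; -X^T, A] along the diagonal of D
   (the principal-minor expansion of det (M + diag d)) kills every index set
   that misses a point of T, and what survives is the sum over C containing T
   of the numerators det [0, X_C:; -X_C:^T, A].  On the other hand, block
   elimination against B, which is invertible since v B v^T = |v X^T|^2 for
   skew A, gives det [D, X; -X^T, A] = det (D + (1 - D) K) det B, and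
   D + (1 - D) K is K with its rows outside T replaced by identity rows, whose
   determinant is det K_TT. *)

From mathcomp Require Import all_boot all_order all_algebra perm.
Set Implicit Arguments. Unset Strict Implicit. Unset Printing Implicit Defensive.
Import Order.TTheory GRing.Theory Num.Theory.
Local Open Scope ring_scope.

Lemma det_reindex (R : comNzRingType) p q (h : 'I_q -> 'I_p) (M : 'M[R]_p) :
  injective h -> q = p -> \det (\matrix_(i, j) M (h i) (h j)) = \det M.
Proof.
move=> h_inj eq_qp; subst q; pose s := perm h_inj.
have -> : \matrix_(i, j) M (h i) (h j) = row_perm s (col_perm s M).
  by apply/matrixP => i j; rewrite !mxE !permE.
rewrite row_permE col_permE !det_mulmx !det_perm odd_permV mulrCA.
by rewrite -expr2 sqrr_sign mulr1.
Qed.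

Definition row_mask (R : pzRingType) m (M : 'M[R]_m) (S : {set 'I_m}) : 'M[R]_m :=
  \matrix_(i, j) if i \in S then M i j else (i == j)%:R.

Lemma det_row_mask_codom (R : comNzRingType) m q (M : 'M[R]_m) (S : {set 'I_m})
    (h : 'I_q -> 'I_m) :
  injective h -> S =i codom h ->
  \det (row_mask M S) = \det (\matrix_(i, j) M (h i) (h j)).
Proof.
move=> h_inj S_codom.
have hS i : h i \in S by rewrite S_codom codom_f.
have cardS : (q + #|~: S| = m)%N.
  have <- : #|S| = q by rewrite (eq_card S_codom) (card_codom h_inj) card_ord.
  by rewrite cardsC card_ord.
pose g (k : 'I_(q + #|~: S|)) :=
  match split k with inl i => h i | inr c => enum_val c end.
have g_inj : injective g.
  move=> k k'; rewrite /g.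
  have h_neq_enum (i : 'I_q) (c : 'I_#|~: S|) : h i != enum_val c.
    by apply: contraTneq (enum_valP c) => <-; rewrite inE hS.
  case: split_ordP => i ->; case: split_ordP => j ->.
  - by move/h_inj ->.
  - by move=> hij; have := h_neq_enum i j; rewrite hij eqxx.
  - by move=> hij; have := h_neq_enum j i; rewrite hij eqxx.
  - by move/enum_val_inj ->.
rewrite -(det_reindex (row_mask M S) g_inj cardS).
have -> : \matrix_(i, j) row_mask M S (g i) (g j) =
    block_mx (\matrix_(i, j) M (h i) (h j)) (\matrix_(i, j) M (h i) (enum_val j))
             0 1%:M.
  apply/matrixP => i j; rewrite mxE [row_mask _ _ _ _]mxE (inj_eq g_inj) /g.
  have notS (c : 'I_#|~: S|) : enum_val c \in S = false.
    by apply/negbTE; have := enum_valP c; rewrite inE.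
  case: split_ordP => a ->; case: split_ordP => b ->;
    rewrite ?block_mxEul ?block_mxEur ?block_mxEdl ?block_mxEdr !mxE
      ?(unsplitK (inl _ _), unsplitK (inr _ _)) ?hS ?notS ?eq_rlshift ?eq_rshift //.
by rewrite det_ublock det1 mulr1.
Qed.

Lemma det_row_mask (R : comNzRingType) m (M : 'M[R]_m) (S : {set 'I_m}) :
  \det (row_mask M S) = \det (psubmx M S).
Proof.
apply: det_row_mask_codom; first exact: enum_val_inj.
move=> k; apply/idP/codomP => [kS | [i ->]]; last exact: enum_valP.
by exists (enum_rank_in kS k); rewrite enum_rankK_in.
Qed.

Lemma det_add_diag (R : comNzRingType) m (M : 'M[R]_m) (d : 'rV[R]_m) :
  \det (M + diag_mx d) =
  \sum_(S : {set 'I_m}) (\prod_(i in ~: S) d 0 i) * \det (row_mask M S).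
Proof.
(* For a fixed permutation, the rows of [row_mask M S] contribute exactly the
   term where the rows outside S pick the diagonal summand d 0 i. *)
rewrite /determinant.
transitivity (\sum_(s : 'S_m) \sum_(S : {set 'I_m})
    (-1) ^+ s * ((\prod_(i in ~: S) d 0 i) * \prod_i row_mask M S i (s i))).
  apply: eq_bigr => s _; rewrite -big_distrr /=; congr (_ * _).
  under eq_bigr => i _ do rewrite !mxE.
  rewrite bigA_distr; apply: eq_bigr => S _.
  rewrite [\prod_(i in ~: S) _]big_mkcond -big_split; apply: eq_bigr => i _.
  by rewrite !mxE inE; case: (i \in S); rewrite /= ?mul1r ?mulr_natr.
rewrite exchange_big; apply: eq_bigr => S _.
by rewrite big_distrr; apply: eq_bigr => s _; rewrite mulrCA.
Qed.

Definition ext_set n r (C : {set 'I_n}) : {set 'I_(n + r)} :=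
  [set k | if split k is inl i then i \in C else true].
Arguments ext_set {n} r C.

Lemma ext_set_lshift n r (C : {set 'I_n}) i :
  (lshift r i \in ext_set r C) = (i \in C).
Proof. by rewrite inE (unsplitK (inl _ _)). Qed.

Lemma ext_set_rshift n r (C : {set 'I_n}) j : rshift n j \in ext_set r C.
Proof. by rewrite inE (unsplitK (inr _ _)). Qed.

Lemma sum_ext_set (V : nmodType) n r (T : {set 'I_n}) (F : {set 'I_(n + r)} -> V) :
  \sum_(S : {set 'I_(n + r)} | ext_set r T \subset S) F S =
  \sum_(C : {set 'I_n} | T \subset C) F (ext_set r C).
Proof.
rewrite (reindex_onto (ext_set r) (fun S => [set i | lshift r i \in S])) /=.
  apply: eq_bigl => C.
  have -> : [set i | lshift r i \in ext_set r C] == C.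
    by apply/eqP/setP => i; rewrite inE ext_set_lshift.
  rewrite andbT; apply/subsetP/subsetP => sub i.
    by have := sub (lshift r i); rewrite !ext_set_lshift.
  by case: (split_ordP i) => [a -> | b ->];
    rewrite ?ext_set_lshift ?ext_set_rshift //; apply: sub.
move=> S sub; apply/setP => k.
case: (split_ordP k) => [i -> | j ->]; first by rewrite ext_set_lshift inE.
by rewrite ext_set_rshift (subsetP sub _ (ext_set_rshift _ _)).
Qed.

Lemma det_row_mask_ext_set (R : comNzRingType) n r (X : 'M[R]_(n, r)) (A : 'M[R]_r)
    (C : {set 'I_n}) :
  \det (row_mask (block_mx 0 X (- X^T) A) (ext_set r C)) = \det (blockC X A C).
Proof.
pose h (k : 'I_(#|C| + r)) : 'I_(n + r) :=
  match split k with inl a => lshift r (enum_val a) | inr b => rshift n b end.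
rewrite (@det_row_mask_codom _ _ _ _ _ h).
- congr (\det _); apply/matrixP => i j; rewrite /blockC mxE /h.
  by case: split_ordP => a ->; case: split_ordP => b ->;
    rewrite ?(unsplitK (inl _ _), unsplitK (inr _ _))
      ?block_mxEul ?block_mxEur ?block_mxEdl ?block_mxEdr ?mxE.
- move=> k k'; rewrite /h.
  case: split_ordP => a ->; case: split_ordP => b -> /eqP;
    rewrite ?eq_lshift ?eq_rshift ?eq_lrshift ?eq_rlshift // => /eqP; last by move->.
  by move/enum_val_inj ->.
- move=> k; apply/idP/codomP => [| [k' ->]].
    case: (split_ordP k) => [i -> | j ->]; last first.
      by exists (rshift _ j); rewrite /h (unsplitK (inr _ _)).
    rewrite ext_set_lshift => iC.
    by exists (lshift r (enum_rank_in iC i)); rewrite /h (unsplitK (inl _ _)) enum_rankK_in.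
  by rewrite /h; case: split_ordP => a _; rewrite ?ext_set_lshift ?enum_valP ?ext_set_rshift.
Qed.

Lemma det_blockC_sum (R : comNzRingType) n r (X : 'M[R]_(n, r)) (A : 'M[R]_r)
    (T : {set 'I_n}) :
  \det (block_mx (diag_mx (\row_i (i \notin T)%:R)) X (- X^T) A) =
  \sum_(C : {set 'I_n} | T \subset C) \det (blockC X A C).
Proof.
pose d : 'rV[R]_(n + r) := row_mx (\row_i (i \notin T)%:R) 0.
have dE k : d 0 k = (k \notin ext_set r T)%:R.
  by case: (split_ordP k) => [i -> | j ->];
    rewrite ?row_mxEl ?row_mxEr !mxE ?ext_set_lshift ?ext_set_rshift.
have -> : block_mx (diag_mx (\row_i (i \notin T)%:R)) X (- X^T) A =
    block_mx 0 X (- X^T) A + diag_mx d.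
  by rewrite diag_mx_row raddf0 add_block_mx add0r !addr0.
under [RHS]eq_bigr do rewrite -det_row_mask_ext_set.
rewrite det_add_diag -(sum_ext_set _ (fun S => \det (row_mask _ S))) [RHS]big_mkcond.
apply: eq_bigr => S _.
case: (boolP (ext_set r T \subset S)) => [sub | /subsetPn [k kT kS]].
  rewrite big1 ?mul1r // => k; rewrite inE => kS.
  by rewrite dE (contra (subsetP sub k) kS).
by rewrite (bigD1 k) ?inE //= dE kT !mul0r.
Qed.

Lemma det_block_schur (R : comUnitRingType) n r (D : 'M[R]_n) (X : 'M[R]_(n, r))
    (A : 'M[R]_r) :
  (A + X^T *m X) \in unitmx ->
  \det (block_mx D X (- X^T) A) =
  \det (D + (1%:M - D) *m (X *m invmx (A + X^T *m X) *m X^T)) * \det (A + X^T *m X).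
Proof.
set B := A + X^T *m X => B_unit.
set V := (1%:M - D) *m X *m invmx B.
have factor_M : block_mx 1%:M X (- X^T) A =
    block_mx 1%:M 0 (- X^T) 1%:M *m block_mx 1%:M X 0 B.
  by rewrite mulmx_block !mul1mx !mulmx1 !mul0mx !addr0 mulNmx /B addrCA addNr addr0.
have factor_N : block_mx D X (- X^T) A =
    block_mx (D + V *m X^T) V 0 1%:M *m block_mx 1%:M X (- X^T) A.
  rewrite mulmx_block !mul1mx !mulmx1 !mul0mx !add0r mulmxN addrK.
  rewrite mulmxDl -addrA -mulmxA -mulmxDr [X^T *m X + A]addrC mulmxKV //.
  by rewrite mulmxBl mul1mx addrC subrK.
rewrite factor_N factor_M !det_mulmx det_ublock det_lblock det_ublock !det1 !mul1r !mulr1.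
by rewrite /V !mulmxA.
Qed.

Lemma row_mask_diag (R : pzRingType) n (K : 'M[R]_n) (S : {set 'I_n}) :
  row_mask K S =
  diag_mx (\row_i (i \notin S)%:R) + (1%:M - diag_mx (\row_i (i \notin S)%:R)) *m K.
Proof.
apply/matrixP => i j; rewrite mulmxBl mul1mx mul_diag_mx !mxE.
by case: (i \in S); rewrite /= ?mul0r ?mul1r ?mul0rn ?subr0 ?add0r ?subrr ?addr0.
Qed.

Lemma skew_quad_form0 (R : numDomainType) m (A : 'M[R]_m) (v : 'rV[R]_m) :
  A^T = - A -> v *m A *m v^T = 0.
Proof.
move=> skewA; set x := v *m A *m v^T.
have xT : x^T = - x by rewrite !trmx_mul trmxK skewA mulNmx mulmxN mulmxA.
have x00 : x 0 0 = - x 0 0.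
  by have := congr1 (fun M : 'M[R]_1 => M 0 0) xT; rewrite [x^T _ _]mxE [(- x) _ _]mxE.
have : x 0 0 *+ 2 == 0 by rewrite mulr2n {1}x00 addNr.
by rewrite mulrn_eq0 /= => /eqP x00_0; apply/matrixP => i j; rewrite !ord1 [RHS]mxE.
Qed.

Lemma rV_mul_tr_eq0 (R : realDomainType) m (w : 'rV[R]_m) : w *m w^T = 0 -> w = 0.
Proof.
move=> ww0; apply/rowP => j; rewrite [RHS]mxE.
have := congr1 (fun M : 'M[R]_1 => M 0 0) ww0; rewrite !mxE => sum0.
have sq_ge0 k : true -> 0 <= w 0 k * w^T k 0 by rewrite mxE -expr2 sqr_ge0.
have := @psumr_eq0P _ _ _ _ sq_ge0 sum0 j isT.
by rewrite mxE -expr2 => /eqP; rewrite sqrf_eq0 => /eqP.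
Qed.

Lemma unitmx_skew_add_gram (R : realFieldType) n r (X : 'M[R]_(n, r)) (A : 'M[R]_r) :
  \rank X = r -> A^T = - A -> (A + X^T *m X) \in unitmx.
Proof.
move=> rkX skewA; rewrite unitmxE unitfE; apply/negP => /det0P [v v_neq0 vB0].
have vXT0 : (v *m X^T) *m (v *m X^T)^T = 0.
  have := congr1 (mulmx^~ v^T) vB0.
  rewrite /= mul0mx mulmxDr mulmxDl skew_quad_form0 // add0r => <-.
  by rewrite trmx_mul trmxK !mulmxA.
have XT_free : row_free X^T by rewrite /row_free mxrank_tr rkX.
have : v *m X^T = 0 *m X^T by rewrite mul0mx (rV_mul_tr_eq0 vXT0).
by move/(row_free_inj XT_free)/eqP; rewrite (negbTE v_neq0).
Qed.

Theorem mainTheorem7 (R : realFieldType) (n r : nat)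
  (X : 'M[R]_(n, r)) (A : 'M[R]_r)
  (hX : \rank X = r) (hA : A^T = - A) (T : {set 'I_n}) :
  \sum_(C : {set 'I_n} | T \subset C) probY X A C
  = \det (psubmx (X *m invmx (A + X^T *m X) *m X^T) T).
Proof.
have B_unit := unitmx_skew_add_gram hX hA.
have detB_neq0 : \det (A + X^T *m X) != 0 by rewrite -unitfE -unitmxE.
have := det_block_schur (diag_mx (\row_i (i \notin T)%:R)) B_unit.
rewrite det_blockC_sum -row_mask_diag det_row_mask => sum_eq.
by rewrite /probY -mulr_suml sum_eq mulfK.
Qed.
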